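(* Suppose problem (CP0-group) has a unique solution $v^*\in\mathbb{C}^M$. Suppose further that $x^*:=\nu^{-1}(v^* )\neq0$ and that $y_i=|q_i^Hx^*|^2$ for $i=1,\dots,N$. Then the solution set of problem (CP0) is exactly $T(x^* )$.
   Context: Complex setting. Let $n,N\ge1$ and $M=n(n+1)/2$. Components of vectors in $\mathbb{C}^M$ are indexed by unordered pairs: for $1\le i,j\le n$ the symmetric index $ij$ ($=ji$) is $\sum_{k=1}^{\min\{i,j\}-1}(n-k+1)+|j-i|+1$, a bijection onto $\{1,\dots,M\}$. The complex Veronese map $\nu:\mathbb{C}^n\to\mathbb{C}^M$ is $(\nu(x))_{ij}=x_i\overline{x_j}$ for $i\le j$. For $j=1,\dots,n$, $W_j$ is the $n\times M$ binary matrix with $(W_j)_{k,l}=1$ iff $l$ is the index $jk$, so $W_jv=(v_{j1},\dots,v_{jn})^T$. $\|x\|_0$ is the number of nonzero entries of $x$. For vectors $u_1,\dots,u_n$, $\|\{u_j\}_{j=1}^n\|_0$ is the number of $j$ with $u_j\ne0$. For $x\in\mathbb{C}^n$, $T(x)=\{zx: z\in\mathbb{C},\ |z|=1\}$. Data: $q_1,\dots,q_N\in\mathbb{C}^n$ and $y\in\mathbb{R}^N$. Define $a_i\in\mathbb{C}^M$ by $(a_i)_{jk}=2q_{ij}\overline{q_{ik}}$ for $j<k$ and $(a_i)_{jj}=|q_{ij}|^2$, i.e. $a_i$ is $\nu(q_i)$ with off-diagonal entries doubled. Let $A=[a_1,\dots,a_N]^H\in\mathbb{C}^{N\times M}$,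 so the $i$-th row of $A$ is $a_i^H$. Inverse map $\nu^{-1}:\mathbb{C}^M\to\mathbb{C}^n$. Let $i$ be the smallest $j$ with $\mathrm{Re}(v_{jj})>0$ and $\mathrm{Im}(v_{jj})=0$ ($i=0$ if none exists). If $i>0$ and $|v_{ji}|^2/v_{ii}=v_{jj}$ for all $j=1,\dots,n$, then $\nu^{-1}(v)=\frac{1}{\sqrt{v_{ii}}}(\overline{v_{1i}},\dots,\overline{v_{ni}})^T$, with $\sqrt{v_{ii}}>0$. Otherwise $\nu^{-1}(v)=0$. (CP0): $\min_{x\in\mathbb{C}^n}\|x\|_0$ subject to $y_i=|q_i^Hx|^2$ for $i=1,\dots,N$. (CP0-group): $\min_{v\in\mathbb{C}^M}\|\{W_jv\}_{j=1}^n\|_0$ subject to $y=\mathrm{Re}(Av)$ and $v_{jj}$ real and nonnegative for $j=1,\dots,n$. *)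

(* The complex field C is modelled by an arbitrary
   numClosedFieldType (e.g. algC). *)
From HB Require Import structures.
From mathcomp Require Import all_boot all_order all_algebra.
Set Implicit Arguments. Unset Strict Implicit. Unset Printing Implicit Defensive.
Import Order.TTheory GRing.Theory Num.Theory.

Definition Mdim (n : nat) : nat := (n * n.+1)./2.

(* 0-based version of the symmetric index:
   1-based  ij = \sum_{k=1}^{min(i,j)-1} (n-k+1) + |j-i| + 1.
   With i' = i-1, j' = j-1 (0-based) and result shifted by -1 this is
   \sum_{k < min(i',j')} (n-k) + |j'-i'|. *)
Definition symidx_nat (n i j : nat) : nat :=
  \sum_(0 <= k < minn i j) (n - k) + (maxn i j - minn i j).

Lemma sum_tri n : \sum_(0 <= k < n) (n - k) = Mdim n.
Proof.
rewrite /Mdim; apply/esym; elim: n => [|n IH]; first by rewrite big_geq.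
rewrite big_nat_recl // subn0.
under eq_big_nat => k _ do rewrite subSS.
rewrite -IH.
have -> : n.+1 * n.+2 = n * n.+1 + (n.+1).*2.
  by rewrite -(addn2 n) mulnDr [n.+1 * n]mulnC muln2.
rewrite halfD odd_double andbF /= doubleK.
by rewrite add0n addnC.
Qed.

Lemma symidx_lt n (i j : 'I_n) : symidx_nat n i j < Mdim n.
Proof.
rewrite /symidx_nat -sum_tri.
set a := minn i j; set b := maxn i j.
have ha : a <= b := leq_trans (geq_minl i j) (leq_maxl i j).
have hb : b < n by rewrite gtn_max !ltn_ord.
have han : a < n := leq_ltn_trans ha hb.
rewrite (@big_cat_nat _ _ _ a 0 n _ _ (leq0n a) (ltnW han)) /= ltn_add2l big_ltn //.
apply: leq_trans (leq_addr _ _).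
by rewrite ltn_subRL subnKC.
Qed.

Local Open Scope ring_scope.

Section Defs.
Variable C : numClosedFieldType.
Variables n N : nat.

Definition sym (i j : 'I_n) : 'I_(Mdim n) := Ordinal (symidx_lt i j).

(* Complex Veronese map: (nu x)_{ij} = x_i conj(x_j) for i <= j.
   Since sym restricted to {i <= j} is a bijection onto 'I_M, the sum below
   has exactly one term for each entry l. *)
Definition veronese (x : 'cV[C]_n) : 'cV[C]_(Mdim n) :=
  \col_l \sum_(i < n) \sum_(j < n | (i <= j)%N && (sym i j == l))
           x i 0 * (x j 0)^*.

Definition Wmx (j : 'I_n) : 'M[C]_(n, Mdim n) :=
  \matrix_(k, l) (l == sym j k)%:R.

Definition l0 (x : 'cV[C]_n) : nat := #|[set j : 'I_n | x j 0 != 0]|.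

Definition group_l0 (v : 'cV[C]_(Mdim n)) : nat :=
  #|[set j : 'I_n | Wmx j *m v != 0]|.

Definition Torbit (x : 'cV[C]_n) : 'cV[C]_n -> Prop :=
  fun w => exists z : C, `|z| = 1 /\ w = z *: x.

(* a_i : nu(q_i) with off-diagonal entries doubled. *)
Definition avec (qi : 'cV[C]_n) : 'cV[C]_(Mdim n) :=
  \col_l \sum_(j < n) \sum_(k < n | (j <= k)%N && (sym j k == l))
           (if j == k then 1 else 2) * (qi j 0 * (qi k 0)^*).

Definition Amx (q : 'I_N -> 'cV[C]_n) : 'M[C]_(N, Mdim n) :=
  \matrix_(i, l) ((avec (q i)) l 0)^*.

Definition qHx (qi x : 'cV[C]_n) : C := ((map_mx (fun z : C => z^*) qi)^T *m x) 0 0.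

Definition veronese_inv (v : 'cV[C]_(Mdim n)) : 'cV[C]_n :=
  match [seq j <- enum 'I_n | (0 < 'Re (v (sym j j) 0)) && ('Im (v (sym j j) 0) == 0)] with
  | [::] => 0
  | i :: _ =>
      if [forall j : 'I_n, `|v (sym j i) 0| ^+ 2 / v (sym i i) 0 == v (sym j j) 0]
      then (sqrtC (v (sym i i) 0))^-1 *: \col_j (v (sym j i) 0)^*
      else 0
  end.

Definition CP0_feasible (q : 'I_N -> 'cV[C]_n) (y : 'cV[C]_N) (x : 'cV[C]_n) :=
  forall i : 'I_N, y i 0 = `|qHx (q i) x| ^+ 2.

Definition CP0_solution q y (x : 'cV[C]_n) :=
  CP0_feasible q y x /\ forall x', CP0_feasible q y x' -> (l0 x <= l0 x')%N.

Definition CP0g_feasible (q : 'I_N -> 'cV[C]_n) (y : 'cV[C]_N)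
    (v : 'cV[C]_(Mdim n)) :=
  (forall i : 'I_N, y i 0 = 'Re ((Amx q *m v) i 0)) /\
  (forall j : 'I_n, 0 <= v (sym j j) 0).

Definition CP0g_solution q y (v : 'cV[C]_(Mdim n)) :=
  CP0g_feasible q y v /\
  forall v', CP0g_feasible q y v' -> (group_l0 v <= group_l0 v')%N.

End Defs.

(* Identifying x with v = nu(x), the equality constraints of (CP0) become the
   linear constraints of (CP0-group), since Re(a_i^H nu(x)) = |q_i^H x|^2, and
   the group sparsity of nu(x) is the sparsity of x; conversely nu^-1 does not
   increase sparsity.  Hence x* := nu^-1 v* is a sparsest feasible point of
   (CP0), and so is every z x* with |z| = 1.  If x solves (CP0), then nu(x)
   solves (CP0-group), so nu(x) = v* by uniqueness.  Finally nu^-1 reads off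
   the column of nu(x) at the first nonzero coordinate i of x, which is
   conj(x_i) x, and normalises it by |x_i|. *)
From mathcomp Require Import all_boot all_order all_algebra ring.
Import Order.TTheory GRing.Theory Num.Theory.
Set Implicit Arguments. Unset Strict Implicit. Unset Printing Implicit Defensive.

Definition sym_offset n i := \sum_(0 <= k < i) (n - k).

Lemma sym_offset_mono n a b : a <= b -> sym_offset n a <= sym_offset n b.
Proof. by move=> ab; rewrite /sym_offset (@big_cat_nat _ _ _ a 0 b) //= leq_addr. Qed.

Lemma symidx_offset n i j : i <= j -> j < n ->
  sym_offset n i <= symidx_nat n i j < sym_offset n i.+1.
Proof.
move=> ij jn; rewrite /symidx_nat /sym_offset (minn_idPl ij) (maxn_idPr ij).
by rewrite big_nat_recr //= leq_addr ltn_add2l ltn_sub2rE // (leq_ltn_trans ij jn).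
Qed.

Lemma symidx_inj n i j i' j' : i <= j -> j < n -> i' <= j' -> j' < n ->
  symidx_nat n i j = symidx_nat n i' j' -> i = i' /\ j = j'.
Proof.
move=> ij jn ij' jn' E.
have /andP[lo hi] := symidx_offset ij jn.
have /andP[lo' hi'] := symidx_offset ij' jn'.
have ii' : i = i'.
  case: (ltngtP i i') => // lt.
  - have := leq_trans (sym_offset_mono n lt) lo'.
    by rewrite -E leqNgt hi.
  - have := leq_trans (sym_offset_mono n lt) lo.
    by rewrite E leqNgt hi'.
subst i'; split => //.
move: E; rewrite /symidx_nat (minn_idPl ij) (maxn_idPr ij).
rewrite (minn_idPl ij') (maxn_idPr ij') => /addnI E.
by rewrite -(subnK ij) E subnK.
Qed.

Lemma symC n (i j : 'I_n) : sym i j = sym j i.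
Proof. by apply: val_inj; rewrite /= /symidx_nat minnC maxnC. Qed.

Lemma sym_inj n (i j i' j' : 'I_n) : i <= j -> i' <= j' ->
  sym i j = sym i' j' -> i = i' /\ j = j'.
Proof.
move=> ij ij' /(congr1 val) /(symidx_inj ij (ltn_ord j) ij' (ltn_ord j')).
by case=> /val_inj -> /val_inj ->.
Qed.

Lemma sym_upper_eq n (i0 j0 i j : 'I_n) : i0 <= j0 ->
  (i <= j) && (sym i j == sym i0 j0) = (i == i0) && (j == j0).
Proof.
move=> h; apply/idP/idP.
- by case/andP=> ij /eqP /(sym_inj ij h) [-> ->]; rewrite !eqxx.
- by case/andP=> /eqP -> /eqP ->; rewrite h eqxx.
Qed.

Local Open Scope ring_scope.

Lemma sum_sym_entry (R : nmodType) n (F : 'I_n -> 'I_n -> R) (i0 j0 : 'I_n) :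
  (i0 <= j0)%N ->
  \sum_(i < n) \sum_(j < n | (i <= j)%N && (sym i j == sym i0 j0)) F i j = F i0 j0.
Proof.
move=> h; under eq_bigr => i _ do rewrite (eq_bigl _ _ (fun j => sym_upper_eq i j h)).
rewrite (bigD1 i0) //= eqxx big_pred1_eq big1 ?addr0 // => i /negbTE i_ne.
by rewrite big_pred0 // => j; rewrite i_ne.
Qed.

Lemma sum_sym_fibres (R : pzSemiRingType) n (F : 'I_n -> 'I_n -> R)
    (G : 'I_(Mdim n) -> R) :
  \sum_(l < Mdim n) (\sum_(j < n) \sum_(k < n | (j <= k)%N && (sym j k == l)) F j k) * G l
  = \sum_(j < n) \sum_(k < n | (j <= k)%N) F j k * G (sym j k).
Proof.
under eq_bigr => l _ do rewrite mulr_suml.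
rewrite exchange_big; apply: eq_bigr => j _.
under eq_bigr => l _ do rewrite mulr_suml.
rewrite (exchange_big_dep (fun k : 'I_n => (j <= k)%N)) => [|l k _ /andP[] //].
apply: eq_bigr => k jk; rewrite (eq_bigl (pred1 (sym j k))) ?big_pred1_eq // => l.
by rewrite /= jk eq_sym.
Qed.

Lemma sum_upper_symmetric (R : pzRingType) n (h : 'I_n -> 'I_n -> R) :
  (forall j k, h j k = h k j) ->
  \sum_(j < n) \sum_(k < n | (j <= k)%N) (if j == k then 1 else 2) * h j k
  = \sum_(j < n) \sum_(k < n) h j k.
Proof.
move=> hC.
have strict_swap : \sum_(j < n) \sum_(k < n | (j < k)%N) h j k
                 = \sum_(j < n) \sum_(k < n | (k < j)%N) h j k.
  rewrite (exchange_big_dep predT) //=.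
  by apply: eq_bigr => j _; apply: eq_bigr => k _; rewrite hC.
have upper (j : 'I_n) : \sum_(k < n | (j <= k)%N) (if j == k then 1 else 2) * h j k
    = \sum_(k < n | (j <= k)%N) h j k + \sum_(k < n | (j < k)%N) h j k.
  rewrite big_mkcond [X in _ = X + _]big_mkcond [X in _ = _ + X]big_mkcond.
  rewrite -big_split /=; apply: eq_bigr => k _.
  rewrite ltn_neqAle -val_eqE /=.
  by case: eqP => [->|_]; case: leqP; rewrite ?mul1r ?addr0 ?mulr_natl ?mulr2n.
rewrite (eq_bigr _ (fun j _ => upper j)) big_split /= strict_swap -big_split /=.
apply: eq_bigr => j _; rewrite [RHS](bigID (fun k : 'I_n => (j <= k)%N)) /=.
by congr (_ + _); apply: eq_bigl => k; rewrite ltnNge.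
Qed.

Lemma filter_enum_ord_min n (p : pred 'I_n) : (exists j, p j) ->
  exists i r, [/\ [seq j <- enum 'I_n | p j] = i :: r, p i
              & forall j, p j -> (i <= j)%N].
Proof.
case=> j0 pj0; case E: [seq j <- enum 'I_n | p j] => [|i r].
  by have := mem_filter p j0 (enum 'I_n); rewrite E mem_enum pj0.
have lt_sorted : sorted (fun a b : 'I_n => (a < b)%N) (enum 'I_n).
  by have := iota_ltn_sorted 0 n; rewrite -val_enum_ord sorted_map.
have lt_trans : transitive (fun a b : 'I_n => (a < b)%N).
  by move=> b a c; apply: ltn_trans.
have := sorted_filter lt_trans p lt_sorted.
rewrite E => /(order_path_min lt_trans) /allP i_min.
have mem_E j : (j \in i :: r) = p j by rewrite -E mem_filter mem_enum andbT.
exists i, r; split => //; first by rewrite -mem_E mem_head.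
by move=> j; rewrite -mem_E inE => /orP[/eqP -> // | /i_min /ltnW].
Qed.

Section Veronese.
Variables (C : numClosedFieldType) (n : nat).
Implicit Types (x : 'cV[C]_n) (v : 'cV[C]_(Mdim n)).

Lemma veronese_sym x (i j : 'I_n) : (i <= j)%N ->
  veronese x (sym i j) 0 = x i 0 * (x j 0)^*.
Proof. by move=> ij; rewrite mxE sum_sym_entry. Qed.

Lemma veronese_symE x (i j : 'I_n) : veronese x (sym i j) 0 =
  if (i <= j)%N then x i 0 * (x j 0)^* else x j 0 * (x i 0)^*.
Proof.
case: leqP => [ij|/ltnW ji]; first exact: veronese_sym.
by rewrite symC veronese_sym.
Qed.

Lemma veronese_diag x (j : 'I_n) : veronese x (sym j j) 0 = `|x j 0| ^+ 2.
Proof. by rewrite veronese_sym // normCK. Qed.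

Lemma veronese0 : veronese (0 : 'cV[C]_n) = 0.
Proof.
apply/matrixP => l k; rewrite !mxE big1 // => i _.
by rewrite big1 // => j _; rewrite mxE mul0r.
Qed.

Lemma Wmx_mulE (j k : 'I_n) v : (Wmx C j *m v) k 0 = v (sym j k) 0.
Proof.
rewrite mxE (bigD1 (sym j k)) //= mxE eqxx mul1r big1 ?addr0 // => l /negbTE l_ne.
by rewrite mxE l_ne mul0r.
Qed.

Lemma group_l0_veronese x : group_l0 (veronese x) = l0 x.
Proof.
apply: eq_card => j; rewrite !inE; apply/idP/idP.
- apply: contraNN => /eqP xj0; apply/eqP/matrixP => k l.
  by rewrite ord1 Wmx_mulE veronese_symE !mxE xj0 conjC0; case: ifP; rewrite ?mulr0 ?mul0r.
- apply: contraNN => /eqP /matrixP /(_ j 0).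
  by rewrite Wmx_mulE veronese_diag mxE => /eqP; rewrite sqrf_eq0 normr_eq0.
Qed.

Lemma veronese_inv0 : veronese_inv (0 : 'cV[C]_(Mdim n)) = 0.
Proof.
rewrite /veronese_inv; case: [seq _ <- _ | _] => // i _; case: ifP => // _.
by apply/matrixP => j k; rewrite !mxE conjC0 mulr0.
Qed.

Lemma l0_zero : l0 (0 : 'cV[C]_n) = 0%N.
Proof. by apply/eqP; rewrite cards_eq0; apply/eqP/setP => j; rewrite !inE mxE eqxx. Qed.

Lemma l0_veronese_inv v : (l0 (veronese_inv v) <= group_l0 v)%N.
Proof.
rewrite /veronese_inv; case: [seq _ <- _ | _] => [|i _]; first by rewrite l0_zero.
case: ifP => _; last by rewrite l0_zero.
apply: subset_leq_card; apply/subsetP => j; rewrite !inE !mxE mulf_eq0 negb_or.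
case/andP=> _; apply: contraNN => /eqP /matrixP /(_ i 0).
by rewrite Wmx_mulE mxE => ->; rewrite conjC0.
Qed.

Lemma veronese_pivot x (i : 'I_n) : (forall j, x j 0 != 0 -> (i <= j)%N) ->
  forall j, (veronese x (sym j i) 0)^* = x j 0 * (x i 0)^*.
Proof.
move=> i_min j; have [xj0|/i_min ij] := eqVneq (x j 0) 0.
  by rewrite veronese_symE xj0; case: ifP; rewrite ?(mul0r, mulr0, conjC0).
by rewrite symC veronese_sym // rmorphM /= conjCK mulrC.
Qed.

Lemma Torbit_sym x w : Torbit x w -> Torbit w x.
Proof.
case=> z [z1 ->]; have z0 : z != 0 by rewrite -normr_eq0 z1 oner_neq0.
by exists z^-1; rewrite normfV z1 invr1 scalerA mulVf ?scale1r.
Qed.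

Lemma veronese_inv_veronese x : x != 0 -> Torbit x (veronese_inv (veronese x)).
Proof.
move=> x0; set v := veronese x.
have pivotE j : (0 < 'Re (v (sym j j) 0)) && ('Im (v (sym j j) 0) == 0) = (x j 0 != 0).
  have real_sq : `|x j 0| ^+ 2 \is Num.real by rewrite realX ?normr_real.
  rewrite veronese_diag (Creal_ReP _ real_sq) (Creal_ImP _ real_sq) eqxx andbT.
  by rewrite lt0r sqrf_eq0 normr_eq0 exprn_ge0 ?andbT.
have [j xj0] : exists j, x j 0 != 0.
  apply/existsP; apply: contraNT x0 => /existsPn x_eq0.
  by apply/eqP/matrixP => j k; rewrite ord1 mxE; apply/eqP/negPn/x_eq0.
have [i [r [E xi0 i_min]]] :=
  @filter_enum_ord_min n (fun j => x j 0 != 0) (ex_intro _ j xj0).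
have nxi0 : `|x i 0| != 0 by rewrite normr_eq0.
rewrite /veronese_inv (eq_filter pivotE) E.
have -> : [forall j, `|v (sym j i) 0| ^+ 2 / v (sym i i) 0 == v (sym j j) 0].
  apply/forallP => k; rewrite -norm_conjC /v (veronese_pivot i_min k) !veronese_diag.
  by rewrite normrM norm_conjC exprMn mulfK ?sqrf_eq0.
have -> : \col_k (v (sym k i) 0)^* = (x i 0)^* *: x.
  by apply/matrixP => k l; rewrite ord1 mxE [RHS]mxE (veronese_pivot i_min) mulrC.
rewrite /v veronese_diag sqrCK ?normr_ge0 // scalerA.
exists (`|x i 0|^-1 * (x i 0)^*); split => //.
by rewrite normrM normfV normr_id norm_conjC mulVf.
Qed.

End Veronese.

Section Measurements.
Variables (C : numClosedFieldType) (n N : nat).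

Lemma conjC_upper_weight (j k : 'I_n) :
  (if j == k then 1 else 2 : C)^* = if j == k then 1 else 2.
Proof. by case: eqP; rewrite ?conjC1 ?conjC_nat. Qed.

Lemma Re_upper_quadratic (w : 'I_n -> C) :
  'Re (\sum_(j < n) \sum_(k < n | (j <= k)%N) (if j == k then 1 else 2) * (w j * (w k)^*))
  = `|\sum_(j < n) w j| ^+ 2.
Proof.
have conj_prod j k : (w j * (w k)^*)^* = w k * (w j)^*.
  by rewrite rmorphM /= conjCK mulrC.
have full : \sum_(j < n) \sum_(k < n) w j * (w k)^* = `|\sum_(j < n) w j| ^+ 2.
  rewrite normCK rmorph_sum mulr_suml; apply: eq_bigr => j _.
  by rewrite mulr_sumr.
rewrite ReE rmorph_sum -big_split /=.
under eq_bigr => j _ do rewrite rmorph_sum -big_split /=.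
under eq_bigr => j _ do under eq_bigr => k _ do
  rewrite rmorphM /= conjC_upper_weight conj_prod -mulrDr.
rewrite (@sum_upper_symmetric _ _ (fun j k => w j * (w k)^* + w k * (w j)^*)) /=;
  last by move=> j k; exact: addrC.
under eq_bigr => j _ do rewrite big_split /=.
by rewrite big_split /= [X in _ + X]exchange_big /= full mulrDl -splitr.
Qed.

Lemma AmxE (q : 'I_N -> 'cV[C]_n) i l : Amx q i l =
  \sum_(j < n) \sum_(k < n | (j <= k)%N && (sym j k == l))
     (if j == k then 1 else 2) * ((q i j 0)^* * q i k 0).
Proof.
rewrite !mxE rmorph_sum; apply: eq_bigr => j _; rewrite rmorph_sum.
by apply: eq_bigr => k _; rewrite !rmorphM /= conjC_upper_weight conjCK.
Qed.

Lemma Re_Amx_veronese (q : 'I_N -> 'cV[C]_n) x i :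
  'Re ((Amx q *m veronese x) i 0) = `|qHx (q i) x| ^+ 2.
Proof.
have -> : qHx (q i) x = \sum_(j < n) (q i j 0)^* * x j 0.
  by rewrite /qHx mxE; apply: eq_bigr => j _; rewrite !mxE.
rewrite -Re_upper_quadratic mxE; under eq_bigr => l _ do rewrite AmxE.
rewrite sum_sym_fibres; congr ('Re _); apply: eq_bigr => j _; apply: eq_bigr => k jk.
by rewrite veronese_sym // rmorphM /= conjCK; ring.
Qed.

End Measurements.

Section PhaseRetrieval.
Variables (C : numClosedFieldType) (n N : nat).
Variables (q : 'I_N -> 'cV[C]_n) (y : 'cV[C]_N).
Implicit Types (x : 'cV[C]_n) (v : 'cV[C]_(Mdim n)).

Lemma CP0g_feasible_veronese x :
  CP0_feasible q y x -> CP0g_feasible q y (veronese x).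
Proof.
move=> x_feas; split => [i|j]; first by rewrite x_feas Re_Amx_veronese.
by rewrite veronese_diag exprn_ge0.
Qed.

Lemma CP0_feasible_scale x (z : C) :
  `|z| = 1 -> CP0_feasible q y x -> CP0_feasible q y (z *: x).
Proof.
move=> z1 x_feas i.
by rewrite x_feas /qHx -scalemxAr [in RHS]mxE normrM z1 mul1r.
Qed.

Lemma l0_scale x (z : C) : z != 0 -> l0 (z *: x) = l0 x.
Proof. by move=> z0; apply: eq_card => j; rewrite !inE mxE mulf_eq0 negb_or z0. Qed.

Lemma l0_veronese_inv_min v x : CP0g_solution q y v -> CP0_feasible q y x ->
  (l0 (veronese_inv v) <= l0 x)%N.
Proof.
move=> [_ v_min] x_feas; apply: leq_trans (l0_veronese_inv v) _.
by rewrite -group_l0_veronese; apply/v_min/CP0g_feasible_veronese.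
Qed.

Lemma CP0_solution_orbit v x : CP0g_solution q y v ->
  CP0_feasible q y (veronese_inv v) -> Torbit (veronese_inv v) x ->
  CP0_solution q y x.
Proof.
move=> v_sol inv_feas [z [z1 ->]]; split; first exact: CP0_feasible_scale.
have z0 : z != 0 by rewrite -normr_eq0 z1 oner_neq0.
by move=> x' x'_feas; rewrite l0_scale //; exact: l0_veronese_inv_min.
Qed.

Lemma CP0g_solution_veronese v x : CP0g_solution q y v ->
  CP0_feasible q y (veronese_inv v) -> CP0_solution q y x ->
  CP0g_solution q y (veronese x).
Proof.
move=> [_ v_min] inv_feas [x_feas x_min].
split=> [|v' v'_feas]; first exact: CP0g_feasible_veronese.
rewrite group_l0_veronese (leq_trans (x_min _ inv_feas)) //.
exact: leq_trans (l0_veronese_inv v) (v_min _ v'_feas).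
Qed.

End PhaseRetrieval.

Unset Implicit Arguments.

Theorem theorem3 (C : numClosedFieldType) (n N : nat) (hn : (1 <= n)%N)
    (hN : (1 <= N)%N) (q : 'I_N -> 'cV[C]_n) (y : 'cV[C]_N)
    (hy : forall i : 'I_N, y i 0 \is Num.real)
    (vs : 'cV[C]_(Mdim n))
    (hvs : CP0g_solution q y vs)
    (huniq : forall v, CP0g_solution q y v -> v = vs)
    (hxs : veronese_inv vs != 0)
    (hfeas : forall i : 'I_N, y i 0 = `|qHx (q i) (veronese_inv vs)| ^+ 2) :
  forall x : 'cV[C]_n, CP0_solution q y x <-> Torbit (veronese_inv vs) x.
Proof.
move=> x; split; last exact: CP0_solution_orbit.
move=> x_sol; have vsE := huniq _ (CP0g_solution_veronese hvs hfeas x_sol).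
have x0 : x != 0.
  by apply: contraNneq hxs => x0; rewrite -vsE x0 veronese0 veronese_inv0.
by apply: Torbit_sym; rewrite -vsE; exact: veronese_inv_veronese.
Qed.
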